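(* Let $q$ be a power of an odd prime, $j\in\mathbb F_q$, $S_j=\{x\in\mathbb F_q^d:\|x\|=j\}$, $A\subset S_j$, $B\subset\mathbb F_q^d$, and for $t\in\mathbb F_q$ let $\mu(t)$ be the number of pairs $(a,b)\in A\times B$ with $\|a-b\|=t$. Then \[\sum_{t\in\mathbb F_q}\mu^2(t)\le\frac{|A|^2|B|^2}{q}+q^{d-1}|A||B|+q^{-2}\eta^d(-1)G_1^d|A|\sum_{b,b'\in B,\ s,r\ne0}\eta^d(r)\,\chi\Big(jr+\frac{s^2\|b'-b\|}{r}\Big)\chi\big(s(\|b'\|-\|b\|)\big).\]
   Context: $\chi$ is a nontrivial additive character of $\mathbb F_q$, $\|x\|=x_1^2+\cdots+x_d^2$, $\eta$ is the quadratic character of $\mathbb F_q^*$, $G_1=\sum_{t\in\mathbb F_q^*}\eta(t)\chi(t)$ is the standard Gauss sum, and $s,r$ range over $\mathbb F_q^*$. *)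

From mathcomp Require Import all_boot all_order all_algebra all_field.
Set Implicit Arguments. Unset Strict Implicit. Unset Printing Implicit Defensive.
Import Order.TTheory GRing.Theory Num.Theory.
Local Open Scope ring_scope.

Definition additive_char (F : finFieldType) (chi : F -> algC) : Prop :=
  chi 0 = 1 /\ forall x y : F, chi (x + y) = chi x * chi y.

Definition nontrivial_char (F : finFieldType) (chi : F -> algC) : Prop :=
  exists x : F, chi x != 1.

Definition eta (F : finFieldType) (t : F) : algC :=
  if t == 0 then 0 else if [exists y : F, y ^+ 2 == t] then 1 else -1.

Definition qnorm (F : finFieldType) (d : nat) (x : 'rV[F]_d) : F :=
  \sum_(i < d) x ord0 i ^+ 2.

Definition sphere (F : finFieldType) (d : nat) (j : F) : {set 'rV[F]_d} :=
  [set x | qnorm x == j].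

Definition gauss1 (F : finFieldType) (chi : F -> algC) : algC :=
  \sum_(t : F | t != 0) eta t * chi t.

Definition mu (F : finFieldType) (d : nat) (A B : {set 'rV[F]_d}) (t : F) : nat :=
  #|[set p : 'rV[F]_d * 'rV[F]_d | (p.1 \in A) && (p.2 \in B) && (qnorm (p.1 - p.2) == t)]|.

From mathcomp Require Import all_boot all_order all_algebra all_field.
From mathcomp Require Import ring.
Set Implicit Arguments. Unset Strict Implicit. Unset Printing Implicit Defensive.
Import Order.TTheory GRing.Theory Num.Theory.
Local Open Scope ring_scope.

(* Expanding the indicator of [||a - b|| = ||a' - b'||] with the additive character
   gives [sum_t mu(t)^2 = q^-1 sum_s |W(s)|^2], [W(s) = sum_(a in A, b in B) chi (s ||a - b||)];
   the term [s = 0] is [|A|^2 |B|^2].  For [a] on the sphere, [||a - b|| = j - 2 a.b + ||b||],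
   so for [s != 0] Cauchy-Schwarz over [a in A], followed by enlarging [A] to [S_j], bounds
   [|W(s)|^2] by [|A|] times a sum over [x in S_j].  Detecting [||x|| = j] by a second
   character sum over [r] splits coordinatewise into one-dimensional Gauss sums:
   [r = 0] contributes [q^d |B|], and completing the square gives the [eta], [G_1] term. *)

Section AdditiveCharacter.

Variables (F : finFieldType) (chi : F -> algC).
Hypotheses (chi0 : chi 0 = 1) (chiD : {morph chi : x y / x + y >-> x * y}).

Local Notation q := (#|F|%:R : algC).

Lemma char_sum (I : Type) (r : seq I) (P : pred I) (f : I -> F) :
  chi (\sum_(i <- r | P i) f i) = \prod_(i <- r | P i) chi (f i).
Proof. exact: big_morph. Qed.

Lemma charMn x n : chi (x *+ n) = chi x ^+ n.
Proof. by elim: n => [|n IHn]; rewrite ?mulr0n ?chi0 // mulrS exprS chiD IHn. Qed.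

Lemma norm_char x : `|chi x| = 1.
Proof.
have [p p_pr /andP[_ /eqP p0]] := finPcharP F.
have chi_p : chi x ^+ p = 1 by rewrite -charMn -mulr_natr p0 mulr0 chi0.
by apply/eqP; rewrite -(pexpr_eq1 (prime_gt0 p_pr) (normr_ge0 _)) -normrX chi_p normr1.
Qed.

Lemma conj_char x : (chi x)^* = chi (- x).
Proof.
have chi_x_neq0 : chi x != 0 by rewrite -normr_eq0 norm_char oner_eq0.
by apply: (mulfI chi_x_neq0); rewrite -normCK norm_char expr1n -chiD subrr chi0.
Qed.

Lemma conj_sum_char (I : Type) (r : seq I) (P : pred I) (f : I -> F) :
  (\sum_(i <- r | P i) chi (f i))^* = \sum_(i <- r | P i) chi (- f i).
Proof. by rewrite rmorph_sum; apply: eq_bigr => i _; apply: conj_char. Qed.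

Lemma natr_card_neq0 : q != 0.
Proof. by rewrite pnatr_eq0 -lt0n; apply/card_gt0P; exists 0. Qed.

Hypothesis chi_nontriv : nontrivial_char chi.

Lemma sum_char : \sum_x chi x = 0.
Proof.
have [x0 chi_x0] := chi_nontriv.
have : chi x0 * \sum_x chi x = \sum_x chi x.
  rewrite mulr_sumr [RHS](reindex_inj (addrI x0)) /=.
  by apply: eq_bigr => y _; rewrite chiD.
move/eqP; rewrite -subr_eq0 -{2}[\sum_x _]mul1r -mulrBl mulf_eq0 subr_eq0.
by rewrite (negbTE chi_x0) => /eqP.
Qed.

Lemma sum_char_mul c : \sum_s chi (s * c) = if c == 0 then q else 0.
Proof.
have [->|c_neq0] := eqVneq c 0.
  by under eq_bigr do rewrite mulr0 chi0; rewrite sumr_const.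
by rewrite -[RHS](sum_char) [RHS](reindex_inj (mulIf c_neq0)).
Qed.

Lemma char_indicator x y : ((x == y)%:R : algC) = q^-1 * \sum_s chi (s * (x - y)).
Proof. by rewrite sum_char_mul subr_eq0; case: eqP => _; rewrite ?mulr0 ?mulVf ?natr_card_neq0. Qed.

Lemma sum_card_fiber_sqr (I : finType) (P : pred I) (f : I -> F) :
  \sum_t (#|[set i | P i && (f i == t)]|%:R : algC) ^+ 2
    = q^-1 * \sum_s `|\sum_(i | P i) chi (s * f i)| ^+ 2.
Proof.
have card_fiber t : (#|[set i | P i && (f i == t)]|%:R : algC) = \sum_(i | P i) (f i == t)%:R.
  by rewrite -sum1dep_card natr_sum big_mkcondr /=; apply: eq_bigr => i _; case: (f i == t).
transitivity (\sum_(i | P i) \sum_(k | P k) ((f i == f k)%:R : algC)).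
  under eq_bigr do rewrite card_fiber expr2 mulr_suml.
  rewrite exchange_big /=; apply: eq_bigr => i _.
  rewrite (bigD1 (f i)) //= eqxx mul1r [X in _ + X]big1 ?addr0 => [|t t_neq].
    by apply: eq_bigr => k _; rewrite eq_sym.
  by rewrite eq_sym (negbTE t_neq) mul0r.
under eq_bigr do under eq_bigr do rewrite char_indicator.
under eq_bigr do rewrite -mulr_sumr.
rewrite -mulr_sumr; congr (_ * _).
under eq_bigr do rewrite exchange_big /=.
rewrite exchange_big /=; apply: eq_bigr => s _.
rewrite normCK conj_sum_char mulr_suml; apply: eq_bigr => i _.
by rewrite mulr_sumr; apply: eq_bigr => k _; rewrite -chiD mulrBr.
Qed.

End AdditiveCharacter.

Lemma odd_card_natr2_neq0 (F : finFieldType) : odd #|F| -> (2%:R : F) != 0.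
Proof.
apply: contraL => two0; have pchar2 : 2%N \in [pchar F] by rewrite inE two0.
have := card_pprimeChar pchar2; rewrite [#|_|]/= => cardF.
by move: (finNzRing_gt1 F); rewrite cardF; case: logn => [|n] //; rewrite expnS oddM.
Qed.

Section QuadraticCharacter.

Variable F : finFieldType.
Hypothesis oddF : odd #|F|.

Lemma eta0 : eta (0 : F) = 0.
Proof. by rewrite /eta eqxx. Qed.

Lemma eta_neq0E (u : F) :
  u != 0 -> eta u = if [exists y, y ^+ 2 == u] then 1 else -1.
Proof. by rewrite /eta => /negbTE ->. Qed.

Lemma eta_sqr (u : F) : u != 0 -> eta u ^+ 2 = 1.
Proof. by move/eta_neq0E ->; case: ifP; rewrite ?sqrrN expr1n. Qed.

Lemma eta_sqrM (y u : F) : y != 0 -> eta (y ^+ 2 * u) = eta u.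
Proof.
move=> y_neq0; have [->|u_neq0] := eqVneq u 0; first by rewrite mulr0.
rewrite !eta_neq0E ?mulf_neq0 ?sqrf_eq0 //; congr (if _ then _ else _).
apply/existsP/existsP => [[z /eqP z2]|[z /eqP z2]].
  by exists (z / y); rewrite expr_div_n z2 mulrC mulKf ?sqrf_eq0.
by exists (y * z); rewrite exprMn z2.
Qed.

Lemma card_sqrt (u : F) : (#|[pred y : F | y ^+ 2 == u]|%:R : algC) = 1 + eta u.
Proof.
have [->|u_neq0] := eqVneq u 0.
  rewrite eta0 addr0 (@eq_card1 _ 0) // => y.
  by rewrite !inE sqrf_eq0.
rewrite eta_neq0E //; case: existsP => [[y /eqP y2]|no_sqrt]; last first.
  rewrite eq_card0 ?subrr // => y; apply/negP => /= /eqP y2.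
  by apply: no_sqrt; exists y; rewrite y2.
have y_neqN : y != - y.
  apply: contra u_neq0 => /eqP yN; rewrite -y2 sqrf_eq0.
  have : 2%:R * y == 0 by rewrite mulr_natl mulr2n {2}yN subrr.
  by rewrite mulf_eq0 (negbTE (odd_card_natr2_neq0 oddF)).
rewrite (eq_card (_ : _ =i [set y; - y])) ?cards2 ?y_neqN // => z.
by rewrite !inE -y2 eqf_sqr.
Qed.

Lemma sum_eta : \sum_(u : F) eta u = 0.
Proof.
have card_partition : \sum_(u : F) (#|[pred y : F | y ^+ 2 == u]|%:R : algC) = #|F|%:R.
  under eq_bigr do rewrite -sum1_card natr_sum.
  transitivity (\sum_(y : F) (1 : algC)); last by rewrite sumr_const.
  by rewrite [RHS](partition_big (fun y => y ^+ 2) predT).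
move: card_partition; under eq_bigr do rewrite card_sqrt.
by rewrite big_split /= sumr_const => /(canRL (addKr _)) ->; apply: addNr.
Qed.

(* For a nonsquare [a], the nonnegative terms [- (eta u + eta (a * u))] sum to 0. *)
Lemma etaM (a b : F) : eta (a * b) = eta a * eta b.
Proof.
have [->|a_neq0] := eqVneq a 0; first by rewrite mul0r eta0 mul0r.
have := eta_neq0E a_neq0; case: existsP => [[y /eqP y2] ->|_ eta_a].
  by rewrite mul1r -y2 eta_sqrM // -sqrf_eq0 y2.
pose D u := - (eta u + eta (a * u)).
have D_ge0 u : true -> 0 <= D u.
  move=> _; rewrite /D; have [->|u_neq0] := eqVneq u 0.
    by rewrite mulr0 eta0 addr0 oppr0.
  rewrite (eta_neq0E u_neq0); case: existsP => [[z /eqP z2]|_].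
    have z_neq0 : z != 0 by rewrite -sqrf_eq0 z2.
    by rewrite -z2 mulrC eta_sqrM // eta_a subrr oppr0.
  rewrite (eta_neq0E (mulf_neq0 a_neq0 u_neq0)).
  by case: ifP; rewrite ?addNr ?oppr0 // -opprD opprK addr_ge0 ?ler01.
have sum_D : \sum_u D u = 0.
  rewrite sumrN big_split /= sum_eta add0r.
  have -> : \sum_(u : F) eta (a * u) = \sum_(u : F) eta u.
    by symmetry; apply: reindex_inj (mulfI a_neq0).
  by rewrite sum_eta oppr0.
have /eqP := psumr_eq0P D_ge0 sum_D (i := b) erefl.
by rewrite /D oppr_eq0 addr_eq0 eta_a mulN1r => /eqP ->; rewrite opprK.
Qed.

End QuadraticCharacter.

Lemma sum_rV_prod (T : finType) (R : comPzSemiRingType) d (f : 'I_d -> T -> R) :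
  \sum_(x : 'rV[T]_d) \prod_(i < d) f i (x ord0 i) = \prod_(i < d) \sum_t f i t.
Proof.
rewrite bigA_distr_bigA /= (reindex (fun x : 'rV[T]_d => [ffun i => x ord0 i])) /=.
  by apply: eq_bigr => x _; apply: eq_bigr => i _; rewrite ffunE.
exists (fun g : {ffun 'I_d -> T} => \row_i g i) => [x _|g _].
  by apply/rowP => i; rewrite mxE ffunE.
by apply/ffunP => i; rewrite ffunE mxE.
Qed.

Section GaussSum.

Variables (F : finFieldType) (chi : F -> algC).
Hypotheses (chi0 : chi 0 = 1) (chiD : {morph chi : x y / x + y >-> x * y}).
Hypotheses (chi_nontriv : nontrivial_char chi) (oddF : odd #|F|).

Local Notation G := (gauss1 chi).

Lemma gauss1E : G = \sum_t eta t * chi t.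
Proof. by rewrite [RHS](bigD1 0) //= eta0 mul0r add0r. Qed.

Lemma gauss_sqr r : r != 0 -> \sum_t chi (r * t ^+ 2) = eta r * G.
Proof.
move=> r_neq0; rewrite (partition_big (fun t => t ^+ 2) predT) //=.
transitivity (\sum_u (#|[pred t : F | t ^+ 2 == u]|%:R : algC) * chi (r * u)).
  apply: eq_bigr => u _; rewrite -sum1_card natr_sum mulr_suml.
  by apply: eq_bigr => t /eqP ->; rewrite mul1r.
under eq_bigr do rewrite card_sqrt // mulrDl mul1r.
rewrite big_split /=.
under [X in X + _]eq_bigr do rewrite mulrC.
rewrite (sum_char_mul chi0 chiD chi_nontriv) (negbTE r_neq0) add0r gauss1E mulr_sumr.
rewrite [RHS](reindex_inj (mulfI r_neq0)) /=.
by apply: eq_bigr => u _; rewrite etaM // !mulrA -expr2 eta_sqr // mul1r.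
Qed.

Lemma gauss_quadratic r b : r != 0 ->
  \sum_t chi (r * t ^+ 2 + 2%:R * b * t) = chi (- (b ^+ 2 / r)) * (eta r * G).
Proof.
move=> r_neq0; rewrite -gauss_sqr // mulr_sumr (reindex_inj (addIr (- (b / r)))) /=.
by apply: eq_bigr => t _; rewrite -chiD; congr chi; field.
Qed.

End GaussSum.

Definition dot (R : pzRingType) d (x y : 'rV[R]_d) : R := \sum_(i < d) x ord0 i * y ord0 i.

Lemma dotBr (R : pzRingType) d (x y z : 'rV[R]_d) : dot x (y - z) = dot x y - dot x z.
Proof. by rewrite /dot -sumrB; apply: eq_bigr => i _; rewrite !mxE mulrBr. Qed.

Lemma qnormB (F : finFieldType) d (x y : 'rV[F]_d) :
  qnorm (x - y) = qnorm x - 2%:R * dot x y + qnorm y.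
Proof.
rewrite /qnorm /dot mulr_sumr -sumrB -big_split /=.
by apply: eq_bigr => i _; rewrite !mxE; ring.
Qed.

Section CharacterSumsOverRows.

Variables (F : finFieldType) (chi : F -> algC).
Hypotheses (chi0 : chi 0 = 1) (chiD : {morph chi : x y / x + y >-> x * y}).
Hypothesis chi_nontriv : nontrivial_char chi.
Variable d : nat.

Local Notation q := (#|F|%:R : algC).

Lemma sum_char_dot c (w : 'rV[F]_d) :
  c != 0 -> \sum_(x : 'rV[F]_d) chi (c * dot x w) = if w == 0 then q ^+ d else 0.
Proof.
move=> c_neq0.
under eq_bigr do rewrite /dot mulr_sumr (char_sum chi0 chiD).
rewrite (sum_rV_prod (fun i t => chi (c * (t * w ord0 i)))).
under eq_bigr do under eq_bigr do rewrite mulrCA.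
under eq_bigr do rewrite (sum_char_mul chi0 chiD chi_nontriv) mulf_eq0 (negbTE c_neq0).
have [->|/eqP w_neq0] := eqVneq w 0.
  by under eq_bigr do rewrite mxE eqxx; rewrite prodr_const card_ord.
have [i w_i] : exists i, w ord0 i != 0.
  apply/existsP; apply: contra_notT w_neq0 => /existsPn w0.
  by apply/rowP => i; apply/eqP; rewrite mxE; apply/negPn.
by rewrite (bigD1 i) //= (negbTE w_i) mul0r.
Qed.

Hypothesis oddF : odd #|F|.

Lemma sum_char_qnorm r c (w : 'rV[F]_d) : r != 0 ->
  \sum_(x : 'rV[F]_d) chi (r * qnorm x + 2%:R * c * dot x w)
    = (eta r * gauss1 chi) ^+ d * chi (- (c ^+ 2 * qnorm w / r)).
Proof.
move=> r_neq0.
have split_coord x : r * qnorm x + 2%:R * c * dot x w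
    = \sum_(i < d) (r * x ord0 i ^+ 2 + 2%:R * (c * w ord0 i) * x ord0 i).
  rewrite big_split /= /qnorm /dot !mulr_sumr.
  by congr (_ + _); apply: eq_bigr => i _; ring.
under eq_bigr do rewrite split_coord (char_sum chi0 chiD).
rewrite (sum_rV_prod (fun i t => chi (r * t ^+ 2 + 2%:R * (c * w ord0 i) * t))).
under eq_bigr do rewrite (gauss_quadratic chi0 chiD chi_nontriv oddF _ r_neq0).
rewrite big_split /= prodr_const card_ord mulrC -(char_sum chi0 chiD); congr (_ * chi _).
by rewrite /qnorm mulr_sumr mulr_suml -sumrN; apply: eq_bigr => i _; ring.
Qed.

End CharacterSumsOverRows.

Section NumSums.

Variables (R : numDomainType) (I : finType).

Lemma ler_sum_subset (A B : {pred I}) (f : I -> R) :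
  {subset A <= B} -> (forall i, 0 <= f i) -> \sum_(i in A) f i <= \sum_(i in B) f i.
Proof.
move=> sAB f_ge0; rewrite [leLHS]big_mkcond [leRHS]big_mkcond /=.
apply: ler_sum => i _; case: ifP => [/sAB -> //|_]; by case: ifP.
Qed.

Lemma sqr_norm_sum_le (A : {pred I}) (f : I -> R) :
  `|\sum_(i in A) f i| ^+ 2 <= #|A|%:R * \sum_(i in A) `|f i| ^+ 2.
Proof.
pose x i := `|f i|.
apply: (@le_trans _ _ ((\sum_(i in A) x i) ^+ 2)).
  apply: lerXn2r; rewrite ?nnegrE ?normr_ge0 ?ler_norm_sum //.
  by apply: sumr_ge0 => i _; apply: normr_ge0.
rewrite -(ler_pMn2r (n := 2)) //.
have -> : (\sum_(i in A) x i) ^+ 2 *+ 2 = \sum_(i in A) \sum_(k in A) x i * x k *+ 2.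
  by rewrite expr2 mulr_suml -sumrMnl; apply: eq_bigr => i _; rewrite mulr_sumr -sumrMnl.
have -> : (#|A|%:R * \sum_(i in A) x i ^+ 2) *+ 2
    = \sum_(i in A) \sum_(k in A) (x i ^+ 2 + x k ^+ 2).
  symmetry; under eq_bigr do rewrite big_split /= sumr_const.
  by rewrite big_split /= sumr_const sumrMnl mulr_natl mulr2n.
apply: ler_sum => i _; apply: ler_sum => k _.
by apply: real_leif_mean_square_scaled; apply: normr_real.
Qed.

End NumSums.

Section DistanceEnergy.

Variables (F : finFieldType) (chi : F -> algC).
Hypotheses (chi0 : chi 0 = 1) (chiD : {morph chi : x y / x + y >-> x * y}).
Hypotheses (chi_nontriv : nontrivial_char chi) (oddF : odd #|F|).
Variables (d : nat) (A B : {set 'rV[F]_d}) (j : F).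

Local Notation q := (#|F|%:R : algC).
Local Notation V := 'rV[F]_d.

Definition dist_char_sum s := \sum_(a in A) \sum_(b in B) chi (s * qnorm (a - b)).

Definition dot_char_sum s (x : V) := \sum_(b in B) chi (s * (qnorm b - 2%:R * dot x b)).

Lemma sum_mu_sqr :
  \sum_t ((mu A B t)%:R : algC) ^+ 2 = q^-1 * \sum_s `|dist_char_sum s| ^+ 2.
Proof.
rewrite (sum_card_fiber_sqr chi0 chiD chi_nontriv (fun p : V * V => (p.1 \in A) && (p.2 \in B))).
congr (_ * _); apply: eq_bigr => s _.
by rewrite -(pair_big (mem A) (mem B) (fun a b => chi (s * qnorm (a - b)))).
Qed.

Lemma dist_char_sum0 : dist_char_sum 0 = #|A|%:R * #|B|%:R.
Proof.
rewrite /dist_char_sum; under eq_bigr do under eq_bigr do rewrite mul0r chi0.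
by rewrite (eq_bigr (fun _ => #|B|%:R)) => [|a _]; rewrite sumr_const // mulr_natl.
Qed.

Lemma sum_sphere (h : V -> algC) :
  \sum_(x in sphere d j) h x = q^-1 * \sum_r \sum_x chi (r * (j - qnorm x)) * h x.
Proof.
rewrite exchange_big mulr_sumr big_mkcond /=; apply: eq_bigr => x _.
rewrite -mulr_suml mulrA -(char_indicator chi0 chiD chi_nontriv) inE eq_sym.
by case: eqP; rewrite ?mul1r ?mul0r.
Qed.

Lemma norm_dot_char_sum s x : `|dot_char_sum s x| ^+ 2
  = \sum_(b in B) \sum_(b' in B) chi (s * (qnorm b' - qnorm b) - 2%:R * s * dot x (b' - b)).
Proof.
rewrite normCK mulrC conj_sum_char // mulr_suml; apply: eq_bigr => b _.
rewrite mulr_sumr; apply: eq_bigr => b' _; rewrite -chiD; congr chi.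
by rewrite dotBr; ring.
Qed.

Lemma sum_char_sphere_dot r s (w : V) : s != 0 ->
  \sum_(x : V) chi (r * (j - qnorm x) - 2%:R * s * dot x w)
    = if r == 0 then (if w == 0 then q ^+ d else 0)
      else eta (-1 : F) ^+ d * gauss1 chi ^+ d
             * (eta r ^+ d * chi (j * r + s ^+ 2 * qnorm w / r)).
Proof.
move=> s_neq0; have [->|r_neq0] := eqVneq r 0.
  have c_neq0 : - (2%:R * s) != 0 by rewrite oppr_eq0 mulf_neq0 ?odd_card_natr2_neq0.
  rewrite -(sum_char_dot chi0 chiD chi_nontriv _ c_neq0).
  by apply: eq_bigr => x _; congr chi; ring.
transitivity (\sum_(x : V) chi (j * r) * chi (- r * qnorm x + 2%:R * (- s) * dot x w)).
  by apply: eq_bigr => x _; rewrite -chiD; congr chi; ring.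
rewrite -mulr_sumr sum_char_qnorm ?oppr_eq0 // chiD !exprMn.
have -> : eta (- r) = eta (-1 : F) * eta r by rewrite -etaM // mulN1r.
have -> : - ((- s) ^+ 2 * qnorm w / - r) = s ^+ 2 * qnorm w / r.
  by field; rewrite oppr_eq0 r_neq0.
by rewrite exprMn; ring.
Qed.

Lemma sum_sphere_norm_dot_char_sum s : s != 0 ->
  \sum_(x in sphere d j) `|dot_char_sum s x| ^+ 2
    = q^-1 * (q ^+ d * #|B|%:R + eta (-1 : F) ^+ d * gauss1 chi ^+ d *
        \sum_(b in B) \sum_(b' in B) \sum_(r : F | r != 0)
          eta r ^+ d * chi (j * r + s ^+ 2 * qnorm (b' - b) / r) * chi (s * (qnorm b' - qnorm b))).
Proof.
move=> s_neq0; rewrite sum_sphere; congr (_ * _).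
transitivity (\sum_r \sum_(b in B) \sum_(b' in B) chi (s * (qnorm b' - qnorm b)) *
                \sum_(x : V) chi (r * (j - qnorm x) - 2%:R * s * dot x (b' - b))).
  apply: eq_bigr => r _.
  under eq_bigr do rewrite norm_dot_char_sum mulr_sumr.
  rewrite exchange_big; apply: eq_bigr => b _.
  under eq_bigr do rewrite mulr_sumr.
  rewrite exchange_big; apply: eq_bigr => b' _.
  by rewrite mulr_sumr; apply: eq_bigr => x _; rewrite -!chiD; congr chi; ring.
under eq_bigr do under eq_bigr do under eq_bigr do rewrite sum_char_sphere_dot //.
rewrite (bigD1 0) //= eqxx; congr (_ + _).
  rewrite mulr_natr -[RHS]sumr_const; apply: eq_bigr => b bB.
  rewrite (bigD1 b) //= !subrr eqxx mulr0 chi0 mul1r big1 ?addr0 // => b' /andP[_ b'_neq].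
  by rewrite subr_eq0 (negbTE b'_neq) mulr0.
rewrite [RHS]mulr_sumr exchange_big; apply: eq_bigr => b _.
rewrite [RHS]mulr_sumr exchange_big; apply: eq_bigr => b' _.
by rewrite [RHS]mulr_sumr; apply: eq_bigr => r /negbTE ->; ring.
Qed.

Hypothesis A_sphere : A \subset sphere d j.

Lemma dist_char_sum_sphere s : dist_char_sum s = chi (s * j) * \sum_(a in A) dot_char_sum s a.
Proof.
rewrite mulr_sumr; apply: eq_bigr => a aA.
have /eqP a_j : qnorm a == j by have := subsetP A_sphere a aA; rewrite inE.
rewrite mulr_sumr; apply: eq_bigr => b _.
by rewrite -chiD qnormB a_j; congr chi; ring.
Qed.

Lemma norm_dist_char_sum_le s :
  `|dist_char_sum s| ^+ 2 <= #|A|%:R * \sum_(x in sphere d j) `|dot_char_sum s x| ^+ 2.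
Proof.
rewrite dist_char_sum_sphere normrM norm_char // mul1r.
apply: le_trans (sqr_norm_sum_le _ _) _.
rewrite ler_wpM2l ?ler0n // ler_sum_subset // => [x|x]; first exact: (subsetP A_sphere).
by rewrite exprn_ge0.
Qed.

Lemma sum_norm_dist_char_sum_le :
  \sum_(s : F | s != 0) `|dist_char_sum s| ^+ 2 <=
    #|A|%:R * q^-1 * (q * (q ^+ d * #|B|%:R) + eta (-1 : F) ^+ d * gauss1 chi ^+ d *
      \sum_(b in B) \sum_(b' in B) \sum_(s : F | s != 0) \sum_(r : F | r != 0)
        eta r ^+ d * chi (j * r + s ^+ 2 * qnorm (b' - b) / r) * chi (s * (qnorm b' - qnorm b))).
Proof.
apply: le_trans (ler_sum _ (fun s _ => norm_dist_char_sum_le s)) _.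
under eq_bigr => s s_neq0 do rewrite sum_sphere_norm_dot_char_sum //.
rewrite -mulrA -mulr_sumr ler_wpM2l ?ler0n // -mulr_sumr ler_wpM2l ?invr_ge0 ?ler0n //.
rewrite big_split /= -mulr_sumr; apply: lerD.
  apply: (@le_trans _ _ (\sum_(s : F) q ^+ d * #|B|%:R)); last by rewrite sumr_const mulr_natl.
  by rewrite mulr_sumr [leRHS](bigD1 0) //= lerDr mulr_ge0 ?exprn_ge0 ?ler0n.
rewrite -mulr_sumr exchange_big /=; under eq_bigr do rewrite exchange_big /=.
exact: lexx.
Qed.

End DistanceEnergy.

Unset Implicit Arguments. Set Strict Implicit. Set Printing Implicit Defensive.

Theorem lemma6p4 (F : finFieldType) (chi : F -> algC) (d : nat) (j : F)
    (A B : {set 'rV[F]_d}) :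
  odd #|F| ->
  additive_char chi -> nontrivial_char chi ->
  A \subset sphere d j ->
  \sum_(t : F) ((mu A B t)%:R : algC) ^+ 2 <=
    (#|A|%:R ^+ 2 * #|B|%:R ^+ 2) / #|F|%:R
    + (#|F|%:R ^+ d / #|F|%:R) * #|A|%:R * #|B|%:R
    + (#|F|%:R ^+ 2)^-1 * (eta (-1 : F)) ^+ d * (gauss1 chi) ^+ d * #|A|%:R *
      \sum_(b in B) \sum_(b' in B) \sum_(s : F | s != 0) \sum_(r : F | r != 0)
        (eta r) ^+ d * chi (j * r + s ^+ 2 * qnorm (b' - b) / r)
          * chi (s * (qnorm b' - qnorm b)).
Proof.
move=> oddF [chi0 chiD] chi_nontriv A_sphere.
rewrite (sum_mu_sqr chi0 chiD chi_nontriv) (bigD1 0) //= (dist_char_sum0 chi0).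
rewrite normrM !normr_nat.
have := sum_norm_dist_char_sum_le chi0 chiD chi_nontriv oddF B A_sphere.
have q_inv_ge0 : 0 <= (#|F|%:R : algC)^-1 by rewrite invr_ge0 ler0n.
rewrite -(lerD2l ((#|A|%:R * #|B|%:R) ^+ 2)) => /(ler_wpM2l q_inv_ge0) /le_trans; apply.
rewrite le_eqVlt; apply/orP; left; apply/eqP.
by field; exact: natr_card_neq0.
Qed.
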